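(* Let $X$ be a real Banach space with $\operatorname{dens} X = \kappa$. If $\operatorname{cf}(\kappa) \geq \mathfrak{c}^+$, then $X$ contains no overcomplete set.
   Context: $\operatorname{dens}$ denotes the density character, $\operatorname{cf}$ the cofinality, $\mathfrak{c}$ the cardinality of the continuum and $\mathfrak{c}^+$ its successor cardinal. A subset $S$ of a Banach space $X$ with $|S| = \operatorname{dens} X$ is called overcomplete if every subset $\Lambda \subseteq S$ with $|\Lambda| = |S|$ is linearly dense in $X$. *)

From HB Require Import structures.
From mathcomp Require Import all_boot all_order all_algebra.
From mathcomp Require Import all_classical all_reals all_analysis.
Set Implicit Arguments. Unset Strict Implicit. Unset Printing Implicit Defensive.
Import Order.TTheory GRing.Theory Num.Theory.
Local Open Scope classical_set_scope.
Local Open Scope ring_scope.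
Local Open Scope card_scope.

Definition has_dens_card (R : realType) (X : completeNormedModType R)
    {U : Type} (S : set U) : Prop :=
  (exists D : set X, dense D /\ (S #= D)) /\
  (forall D : set X, dense D -> S #<= D).

Definition lspan (R : realType) (X : completeNormedModType R) (L : set X) : set X :=
  [set x | exists (n : nat) (c : 'I_n -> R) (v : 'I_n -> X),
      (forall i, L (v i)) /\ x = \sum_(i < n) c i *: v i].

Definition linearly_dense (R : realType) (X : completeNormedModType R) (L : set X) :=
  closure (lspan L) = setT.

Definition overcomplete (R : realType) (X : completeNormedModType R) (S : set X) :=
  has_dens_card X S /\
  (forall L : set X, L `<=` S -> (L #= S) -> linearly_dense L).

(** [(W, lt)] is an initial ordinal (a cardinal, von Neumann style):
    a strict well-order every proper initial segment of which has
    strictly smaller cardinality than [W]. *)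
Definition initial_ordinal (W : Type) (lt : W -> W -> Prop) : Prop :=
  (forall x, ~ lt x x) /\
  (forall x y z, lt x y -> lt y z -> lt x z) /\
  (forall x y, lt x y \/ x = y \/ lt y x) /\
  well_founded lt /\
  (forall x : W, ~ ([set: W] #<= [set y | lt y x])).

Definition cofinal (W : Type) (lt : W -> W -> Prop) (C : set W) : Prop :=
  forall x : W, exists2 y, C y & (x = y \/ lt x y).

(** cf(κ) >= 𝔠^+ i.e. cf(κ) > 𝔠 : every cofinal subset of κ has
    cardinality strictly larger than |R| = 𝔠. *)
Definition cf_ge_c_succ (R : realType) (W : Type) (lt : W -> W -> Prop) : Prop :=
  forall C : set W, cofinal lt C -> ~ (C #<= [set: R]).

From mathcomp Require Import all_boot all_order all_algebra.
From mathcomp Require Import all_classical all_reals all_analysis.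
From mathcomp.algebra_tactics Require Import ring lra.
Set Implicit Arguments. Unset Strict Implicit. Unset Printing Implicit Defensive.
Import Order.TTheory GRing.Theory Num.Theory.
Local Open Scope classical_set_scope.
Local Open Scope card_scope.

(* Let kappa = |W|.  Because cf kappa > c, every map from a set of size kappa
   to R has a fibre of size kappa: otherwise kappa would be covered by c
   fibres, all smaller than a single initial segment of size lambda < kappa,
   and c * lambda < kappa by Hessenberg's theorem.  Since kappa > c, the
   space X has more than c points, so Hahn-Banach yields bounded functionals
   f, g with f x0 <> 0 and f y0 = 0 <> g y0.  Inside an overcomplete S,
   taking a fibre of f and then a fibre of g gives Lambda with |Lambda| = |S|
   on which f = a and g = b; then f (if a = 0) or b f - a g is a nonzero
   bounded functional vanishing on Lambda, so Lambda is not linearly dense. *)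

Lemma card_le_of_inj T U (A : set T) (B : set U) (f : T -> U) :
  (forall x, A x -> B (f x)) ->
  (forall x y, A x -> A y -> f x = f y -> x = y) -> A #<= B.
Proof.
move=> fAB finj.
have [->|/set0P[a Aa]] := eqVneq A set0; first exact: card_ge0.
elim/Ppointed: U => U in B f fAB finj *; first by case: (no (f a)).
apply/pcard_leP/injfunPex; exists f => [x /fAB //|x y /set_mem Ax /set_mem Ay].
exact: finj.
Qed.

Lemma inj_of_card_le T U (A : set T) (B : set U) (u0 : U) : A #<= B ->
  exists f : T -> U, (forall x, A x -> B (f x)) /\
    (forall x y, A x -> A y -> f x = f y -> x = y).
Proof.
elim/Ppointed: U => U in B u0 *; first by case: (no u0).
move=> /pcard_leP/injfunPex[f fAB finj]; exists f; split => [x /fAB //|x y Ax Ay].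
by apply: finj; rewrite inE.
Qed.

Lemma card_leX T U T' U' (A : set T) (B : set U) (A' : set T') (B' : set U')
    (a0 : T') (b0 : U') :
  A #<= A' -> B #<= B' -> A `*` B #<= A' `*` B'.
Proof.
move=> /(inj_of_card_le a0)[f [fA finj]] /(inj_of_card_le b0)[g [gB ginj]].
apply: (@card_le_of_inj _ _ _ _ (fun p => (f p.1, g p.2))).
  by move=> [x y] [/= Ax By]; split; [exact: fA|exact: gB].
by move=> [x y] [x' y'] [/= Ax By] [/= Ax' By'] [] /finj-> // /ginj->.
Qed.

Lemma card_le_setX_fibers T U V (psi : T -> U) (B : set V) (v0 : V) :
  (forall u, psi @^-1` [set u] #<= B) -> [set: T] #<= [set: U] `*` B.
Proof.
move=> fibB; have /choice[io ioP] u := inj_of_card_le v0 (fibB u).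
apply: (@card_le_of_inj _ _ _ _ (fun t => (psi t, io (psi t) t))).
  by move=> t _; split => //; have [+ _] := ioP (psi t); apply.
move=> t t' _ _ [e1 e2]; have [_ +] := ioP (psi t); apply => //.
by rewrite e2 e1.
Qed.

(* An injected copy of [nat] inside [A] is shifted by one to make room for [x]. *)
Lemma card_le_setU1 T (A : set T) (x : T) : infinite_set A -> x |` A #<= A.
Proof.
move=> /infiniteP /(inj_of_card_le x)[e [eA einj]].
have {}einj n n' : e n = e n' -> n = n' by move=> /einj; apply.
pose k y := if pselect (exists n, e n = y) is left h then e (projT1 (cid h)).+1
            else if pselect (y = x) then e 0 else y.
apply: (@card_le_of_inj _ _ _ _ k).
  move=> y Ay; rewrite /k; case: pselect => [h|nh]; first exact: eA.
  by case: pselect => [yx|yx]; [exact: eA|case: Ay].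
move=> y z _ _; rewrite /k.
case: (pselect (exists n, e n = y)) => [hy|nhy];
  case: (pselect (exists n, e n = z)) => [hz|nhz].
- case: (cid hy) => n /= en; case: (cid hz) => n' /= en' /einj[nn'].
  by rewrite -en -en' nn'.
- case: (cid hy) => n /= _; case: pselect => [zx|zx] ez; first by have := einj _ _ ez.
  by exfalso; apply: nhz; exists n.+1.
- case: (cid hz) => n /= _; case: pselect => [yx|yx] ey; first by have := einj _ _ ey.
  by exfalso; apply: nhy; exists n.+1.
- case: pselect => [yx|yx]; case: pselect => [zx|zx] //= e0.
  + by rewrite yx zx.
  + by exfalso; apply: nhz; exists 0%N.
  + by exfalso; apply: nhy; exists 0%N.
Qed.

(* Transfinite recursion along [ltP]: each [p] is sent to a point of [B]
   not yet used by its predecessors, which exists since [B] is larger than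
   the set of those predecessors. *)
Lemma card_le_of_segments P V (ltP : P -> P -> Prop) (A : set P) (B : set V) :
  well_founded ltP ->
  (forall p q, A p -> A q -> ltP p q \/ p = q \/ ltP q p) ->
  (forall p, A p -> ~ (B #<= A `&` [set q | ltP q p])) -> A #<= B.
Proof.
move=> wf tot large.
have [->|/set0P[a0 Aa0]] := eqVneq A set0; first exact: card_ge0.
have /set0P[v0 Bv0] : B != set0.
  by apply/eqP => B0; apply: (large a0 Aa0); rewrite B0.
pose F p (rec : forall q, ltP q p -> V) : V :=
  if pselect (exists v, B v /\ forall q (h : ltP q p), A q -> rec q h <> v)
    is left e then projT1 (cid e) else v0.
pose g := Fix wf (fun _ => V) F.
have gE p : g p = F p (fun q _ => g q).
  rewrite /g Fix_eq // => x f1 f2 e; congr F.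
  by apply: functional_extensionality_dep => y; apply: functional_extensionality_dep.
have gP p : A p -> B (g p) /\ forall q, A q -> ltP q p -> g q <> g p.
  move=> Ap; rewrite gE /F; case: pselect => [e|ne].
    by case: cid => v [Bv hv] /=; split => // q Aq lqp; exact: hv.
  exfalso; apply: (large p Ap).
  have /choice[h hP] v : exists q, B v -> A q /\ ltP q p /\ g q = v.
    have [Bv|nBv] := pselect (B v); last by exists a0.
    apply: contrapT => nq; apply: ne; exists v; split => // q h Aq gqv.
    by apply: nq; exists q.
  apply: (@card_le_of_inj _ _ _ _ h) => [v /hP[? []] //|v w Bv Bw hvw].
  by have [_ [_ <-]] := hP v Bv; have [_ [_ <-]] := hP w Bw; rewrite hvw.
apply: (@card_le_of_inj _ _ _ _ g) => [x /gP[] //|x y Ax Ay gxy].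
have [lxy|[//|lyx]] := tot x y Ax Ay.
  by have [_ /(_ x Ax lxy)] := gP y Ay.
by have [_ /(_ y Ay lyx)] := gP x Ax; rewrite gxy.
Qed.

Section InitialOrdinal.
Variables (W : Type) (lt : W -> W -> Prop).
Hypothesis lt_trans : forall x y z, lt x y -> lt y z -> lt x z.
Hypothesis lt_total : forall x y, lt x y \/ x = y \/ lt y x.
Hypothesis lt_wf : well_founded lt.

Definition seg x := [set y | lt y x].
Definition cseg x := x |` seg x.

Lemma cseg_trans x y z : cseg y x -> cseg z y -> cseg z x.
Proof.
case=> [->//|lxy] [<-|lyz]; [by right|by right; exact: lt_trans lxy lyz].
Qed.

Lemma seg_sub x y : cseg y x -> seg x `<=` seg y.
Proof. by case=> [->//|lxy] z lzx; exact: lt_trans lzx lxy. Qed.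

Definition omax a b := if pselect (lt a b) then b else a.

Lemma omax_cseg_l a b : cseg (omax a b) a.
Proof. by rewrite /omax; case: (pselect (lt a b)) => h; [right|left]. Qed.

Lemma omax_cseg_r a b : cseg (omax a b) b.
Proof.
rewrite /omax; case: (pselect (lt a b)) => [lab|nab] /=; first by left.
by have [//|[->|lba]] := lt_total a b; [left|right].
Qed.

Lemma omax_lt a b d : lt a d -> lt b d -> lt (omax a b) d.
Proof. by rewrite /omax; case: (pselect (lt a b)). Qed.

Definition godel_lt (p q : W * W) :=
  lt (omax p.1 p.2) (omax q.1 q.2) \/
  (omax p.1 p.2 = omax q.1 q.2 /\ (lt p.1 q.1 \/ (p.1 = q.1 /\ lt p.2 q.2))).

Lemma godel_lt_wf : well_founded godel_lt.
Proof.
suff accE m a b : omax a b = m -> Acc godel_lt (a, b) by move=> [a b]; exact: accE.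
elim/(well_founded_ind lt_wf): m a b => m IHm a.
elim/(well_founded_ind lt_wf): a => a IHa b.
elim/(well_founded_ind lt_wf): b => b IHb abm.
constructor => -[c d]; rewrite /godel_lt /= abm => -[lcm|[cdm [lca|[ca ldb]]]].
- exact: IHm lcm c d erefl.
- exact: IHa lca d cdm.
- by rewrite ca in cdm *; exact: IHb ldb cdm.
Qed.

Lemma godel_lt_total p q : godel_lt p q \/ p = q \/ godel_lt q p.
Proof.
case: p q => [a b] [c d]; rewrite /godel_lt /=.
have [lm|[em|lm]] := lt_total (omax a b) (omax c d);
  [by left; left| |by right; right; left].
have [lac|[ac|lca]] := lt_total a c.
- by left; right; split; last left.
- subst c; have [lbd|[bd|ldb]] := lt_total b d.
  + by left; right; split; last right.
  + by right; left; rewrite bd.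
  + by right; right; right; split; last right.
- by right; right; right; split; last left.
Qed.

Lemma godel_lt_cseg p q :
  godel_lt q p -> cseg (omax p.1 p.2) q.1 /\ cseg (omax p.1 p.2) q.2.
Proof.
move=> lqp; have le_max : cseg (omax p.1 p.2) (omax q.1 q.2).
  by case: lqp => [l|[e _]]; [right|left].
by split; apply: cseg_trans le_max; [exact: omax_cseg_l|exact: omax_cseg_r].
Qed.

(* Hessenberg: if [seg d #<= seg d'] for some [d' < d], use induction at
   [d'].  Otherwise every proper Goedel initial segment of [seg d `*` seg d]
   lies in [cseg m `*` cseg m] for some [m < d], which by induction is
   strictly smaller than [seg d]. *)
Lemma card_segX_le d : infinite_set (seg d) -> seg d `*` seg d #<= seg d.
Proof.
elim/(well_founded_ind lt_wf): d => d IH infd.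
have [[d' [ld'd le]]|nle] := pselect (exists d', lt d' d /\ seg d #<= seg d').
  have infd' : infinite_set (seg d') by move=> /(card_le_finite le).
  apply: card_le_trans (card_leX d d le le) _.
  apply: card_le_trans (IH d' ld'd infd') (subset_card_le _).
  by apply: seg_sub; right.
apply: (card_le_of_segments godel_lt_wf) => [p q _ _|p [lp1d lp2d] le].
  exact: godel_lt_total.
pose m := omax p.1 p.2.
have lmd : lt m d by exact: omax_lt.
have le_cseg : seg d #<= cseg m `*` cseg m.
  apply: card_le_trans le (subset_card_le _) => q [_ lqp].
  by have [] := godel_lt_cseg lqp.
have infm : infinite_set (seg m).
  move=> finm; apply: infd; apply: card_le_finite le_cseg _.
  by apply: finite_setX; rewrite /cseg finite_setU; split => //; exact: finite_set1.
apply: nle; exists m; split => //.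
have le_csegm := card_le_setU1 m infm.
apply: card_le_trans le_cseg (card_le_trans (card_leX m m le_csegm le_csegm) _).
exact: IH.
Qed.

Lemma card_le_seg U (A : set U) : ~ ([set: W] #<= A) -> exists a, A #<= seg a.
Proof.
move=> nWA; apply: contrapT => nseg; apply: nWA.
apply: (card_le_of_segments lt_wf) => [p q _ _|p _]; first exact: lt_total.
by rewrite setTI => Aseg; apply: nseg; exists p.
Qed.

Hypothesis W_initial : forall x : W, ~ ([set: W] #<= seg x).
Variable U : Type.
Hypothesis cf_gt_U : forall C, cofinal lt C -> ~ (C #<= [set: U]).
Hypothesis U_infinite : infinite_set [set: U].

Lemma cofinal_bound (al : U -> W) : exists b, forall u, lt (al u) b.
Proof.
apply: contrapT => nb; apply: (cf_gt_U _ (card_image_le al [set: U])).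
move=> x; apply: contrapT => nx; apply: nb; exists x => u.
have [//|[xu|lxu]] := lt_total (al u) x; exfalso; apply: nx; exists (al u) => //.
- by left.
- by right.
Qed.

(* If all fibres were small, [W] would be covered by [U `*` seg d] for one
   [d], and [seg d] absorbs both factors. *)
Lemma card_fiber_full (psi : W -> U) : exists u, [set: W] #<= psi @^-1` [set u].
Proof.
apply: contrapT => nfull.
have /choice[al alP] u : exists a, psi @^-1` [set u] #<= seg a.
  by apply: card_le_seg => le; apply: nfull; exists u.
have [b alb] := cofinal_bound al.
have nWU : ~ ([set: W] #<= [set: U]) by apply: cf_gt_U => x; exists x => //; left.
have [g Ug] := card_le_seg nWU.
pose d := omax b g.
have fib_d u : psi @^-1` [set u] #<= seg d.
  apply: card_le_trans (alP u) (subset_card_le _) => w lw.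
  by apply: (seg_sub (omax_cseg_l b g)); exact: lt_trans lw (alb u).
have Ud : [set: U] #<= seg d.
  exact: card_le_trans Ug (subset_card_le (seg_sub (omax_cseg_r b g))).
have infd : infinite_set (seg d) by move=> /(card_le_finite Ud).
have Ud_d := card_le_trans (card_leX d d Ud (card_lexx (seg d))) (card_segX_le infd).
exact: W_initial d (card_le_trans (card_le_setX_fibers d fib_d) Ud_d).
Qed.

Lemma equipotent_level_subset T (S : set T) (F : T -> U) : [set: W] #= S ->
  exists u, exists2 L, L `<=` S & L #= S /\ (forall s, L s -> F s = u).
Proof.
move=> /card_eqPle[WS SW]; elim/Ppointed: T => T in S F WS SW *.
  have [u _] := infinite_setN0 U_infinite.
  by exists u, set0 => //; rewrite (empty_eq0 S).
have [e [eS einj]] := inj_of_card_le point WS.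
have [u Wfib] := card_fiber_full (F \o e).
pose L := e @` ((F \o e) @^-1` [set u]).
exists u, L => [_ [w _ <-]|]; first exact: eS.
split=> [|_ [w fw <-] //]; apply: Cantor_Bernstein.
  by apply: subset_card_le => _ [w _ <-]; exact: eS.
apply: card_le_trans SW (card_le_trans Wfib _).
have /card_eqPle[_ fibL] : L #= (F \o e) @^-1` [set u].
  by apply: inj_card_eq => w w' _ _; exact: einj.
exact: fibL.
Qed.

End InitialOrdinal.

Section HahnBanach.
Local Open Scope ring_scope.
Variables (R : realType) (X : normedModType R).

Definition linear_functional (f : X -> R) :=
  forall a b x y, f (a *: x + b *: y) = a * f x + b * f y.

Definition dominated_linear_graph (G : set (X * R)) :=
  [/\ forall p q a b, G p -> G q -> G (a *: p.1 + b *: q.1, a * p.2 + b * q.2),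
      forall p q, G p -> G q -> p.1 = q.1 -> p.2 = q.2 &
      forall p, G p -> p.2 <= `|p.1|].

Lemma dominated_linear_graphZ G p a :
  dominated_linear_graph G -> G p -> G (a *: p.1, a * p.2).
Proof.
by case=> Glin _ _ Gp; have := Glin p p a 0 Gp Gp; rewrite scale0r mul0r !addr0.
Qed.

Lemma dominated_linear_graph_norm G p :
  dominated_linear_graph G -> G p -> `|p.2| <= `|p.1|.
Proof.
move=> G_dlg Gp; have [_ _ Gdom] := G_dlg.
rewrite ler_norml Gdom // andbT lerNl.
have := Gdom _ (dominated_linear_graphZ (-1) G_dlg Gp).
by rewrite /= scaleN1r mulN1r normrN.
Qed.

Lemma dominated_linear_graph_bigcup (F : set (set (X * R))) :
  F `<=` dominated_linear_graph -> total_on F subset ->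
  dominated_linear_graph (\bigcup_(G in F) G).
Proof.
move=> F_dlg Ftot; split.
- move=> p q a b [G FG Gp] [H FH Hq].
  have [GH|HG] := Ftot _ _ FG FH.
    by exists H => //; have [Hlin _ _] := F_dlg _ FH; apply: Hlin => //; exact: GH.
  by exists G => //; have [Glin _ _] := F_dlg _ FG; apply: Glin => //; exact: HG.
- move=> p q [G FG Gp] [H FH Hq].
  have [GH|HG] := Ftot _ _ FG FH.
    by have [_ Hfun _] := F_dlg _ FH; apply: Hfun => //; exact: GH.
  by have [_ Gfun _] := F_dlg _ FG; apply: Gfun => //; exact: HG.
- by move=> p [G FG Gp]; have [_ _ Gdom] := F_dlg _ FG; exact: Gdom.
Qed.

Lemma dominated_linear_graph_line x0 : x0 != 0 ->
  dominated_linear_graph [set p | exists l, p = (l *: x0, l * `|x0|)].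
Proof.
move=> x0N0; split.
- move=> _ _ a b [l ->] [m ->] /=; exists (a * l + b * m).
  by rewrite scalerDl !scalerA mulrDl !mulrA.
- move=> _ _ [l ->] [m ->] /= lm; congr (_ * _).
  have /eqP : (l - m) *: x0 = 0 by rewrite scalerBl lm subrr.
  by rewrite scaler_eq0 (negbTE x0N0) orbF subr_eq0 => /eqP.
- by move=> _ [l ->] /=; rewrite normrZ ler_wpM2r // ler_norm.
Qed.

Section Extension.
Variables (G : set (X * R)) (y : X).
Hypotheses (G_dlg : dominated_linear_graph G) (G00 : G (0, 0)).

Definition graph_extension (c : R) :=
  [set r | exists p l, G p /\ r = (p.1 + l *: y, p.2 + l * c)].

Lemma graph_extension_proper c : (forall t, ~ G (y, t)) -> G `<` graph_extension c.
Proof.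
move=> y_notin; split => [[a b] Gab|GE].
  by exists (a, b), 0; rewrite scale0r mul0r !addr0.
by apply: (y_notin c); apply: GE; exists (0, 0), 1; rewrite /= scale1r mul1r !add0r.
Qed.

(* The triangle inequality puts every lower constraint on the value [c] at
   [y] below every upper one. *)
Lemma extension_value_exists : exists c, forall p, G p ->
  p.2 - `|p.1 - y| <= c /\ c <= `|p.1 + y| - p.2.
Proof.
have [Glin _ Gdom] := G_dlg.
have lb_ub p q : G p -> G q -> p.2 - `|p.1 - y| <= `|q.1 + y| - q.2.
  move=> Gp Gq; have := Gdom _ (Glin p q 1 1 Gp Gq); rewrite /= !scale1r !mul1r.
  have : `|p.1 + q.1| <= `|p.1 - y| + `|q.1 + y|.
    rewrite (_ : p.1 + q.1 = (p.1 - y) + (q.1 + y)) ?ler_normD //.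
    by rewrite addrACA addNr addr0.
  lra.
pose E := [set u | exists2 p, G p & u = p.2 - `|p.1 - y|].
have supE : has_sup E.
  split; first by exists (0 - `|0 - y|), (0, 0).
  by exists (`|0 + y| - 0) => _ [p Gp ->]; exact: (lb_ub p (0, 0)).
exists (sup E) => p Gp; split; first by apply: sup_upper_bound => //; exists p.
by apply: ge_sup; [case: supE|move=> _ [q Gq ->]; exact: lb_ub].
Qed.

Variable c : R.
Hypothesis c_bounds : forall p, G p -> p.2 - `|p.1 - y| <= c /\ c <= `|p.1 + y| - p.2.

(* Domination at [p + l y] reduces, after rescaling by [l^-1], to one of the
   two bounds on [c], depending on the sign of [l]. *)
Lemma graph_extension_dominated r : graph_extension c r -> r.2 <= `|r.1|.
Proof.
have [_ _ Gdom] := G_dlg.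
move=> [p [l [Gp ->]]] /=.
have [->|l0] := eqVneq l 0; first by rewrite scale0r mul0r !addr0; exact: Gdom.
have [q1 [q2 [Gq p1E p2E]]] :
    exists q1 q2, [/\ G (q1, q2), p.1 = l *: q1 & p.2 = l * q2].
  exists (l^-1 *: p.1), (l^-1 * p.2); split; first exact: dominated_linear_graphZ.
    by rewrite scalerA mulfV // scale1r.
  by rewrite mulrA mulfV // mul1r.
have Gnq : G (- q1, - q2).
  by have := dominated_linear_graphZ (-1) G_dlg Gq; rewrite /= scaleN1r mulN1r.
rewrite p1E p2E -[l *: q1 + _]scalerDr normrZ.
have [_ ub] := c_bounds Gq; have [lb _] := c_bounds Gnq; move: lb ub => /=.
rewrite -[- q1 - y]opprD normrN; have [l_gt0|l_le0] := ltrP 0 l.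
  by rewrite gtr0_norm //; nra.
by rewrite ler0_norm //; nra.
Qed.

Lemma graph_extension_dlg : (forall t, ~ G (y, t)) ->
  dominated_linear_graph (graph_extension c).
Proof.
have [Glin Gfun _] := G_dlg; move=> y_notin; split.
- move=> _ _ a b [p [l [Gp ->]]] [q [m [Gq ->]]] /=.
  exists (a *: p.1 + b *: q.1, a * p.2 + b * q.2), (a * l + b * m).
  split; first exact: Glin.
  congr (_, _); last by rewrite /=; ring.
  by rewrite /= !scalerDr !scalerDl !scalerA addrACA.
- move=> _ _ [p [l [Gp ->]]] [q [m [Gq ->]]] /= plqm.
  have [lm|lNm] := eqVneq l m.
    by move: plqm; rewrite lm => /addIr/(Gfun _ _ Gp Gq)->.
  exfalso; apply: (y_notin ((l - m)^-1 * q.2 + (- (l - m)^-1) * p.2)).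
  have lmN0 : l - m != 0 by rewrite subr_eq0.
  suff -> : y = (l - m)^-1 *: q.1 + (- (l - m)^-1) *: p.1 by exact: Glin.
  have lmy : (l - m) *: y = q.1 - p.1.
    apply: (@addIr _ (m *: y)); rewrite scalerBl subrK.
    by apply: (@addrI _ p.1); rewrite plqm addrA [p.1 + _]addrC subrK.
  by rewrite scaleNr -scalerBr -lmy scalerA mulVf // scale1r.
- exact: graph_extension_dominated.
Qed.

End Extension.

Lemma exists_norming_functional x0 : x0 != 0 -> exists f : X -> R,
  [/\ linear_functional f, forall x, `|f x| <= `|x| & f x0 = `|x0|].
Proof.
move=> x0N0.
(* [G = set0] is allowed so that the empty chain has an admissible union. *)
pose P G := dominated_linear_graph G /\ (G = set0 \/ G (x0, `|x0|)).
have [A [[A_dlg A0x0] Amax]] : exists A, P A /\ forall B, A `<` B -> ~ P B.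
  apply: Zorn_bigcup => F FP Ftot; split.
    by apply: dominated_linear_graph_bigcup => // G /FP[].
  have [[G FG Gx0]|nx0] := pselect (exists2 G, F G & G (x0, `|x0|)).
    by right; exists G.
  left; apply/seteqP; split => // p [G FG Gp].
  have [_ [G0|Gx0]] := FP _ FG; first by rewrite G0 in Gp.
  by apply: nx0; exists G.
have Ax0 : A (x0, `|x0|).
  case: A0x0 => // A0; exfalso.
  apply: (Amax _ _ (conj (dominated_linear_graph_line x0N0) _)); last first.
    by right; exists 1; rewrite scale1r mul1r.
  rewrite A0; split => // /(_ (x0, `|x0|)) x0_in.
  by apply: x0_in; exists 1; rewrite scale1r mul1r.
have [Alin Afun _] := A_dlg.
have A00 : A (0, 0).
  by have := dominated_linear_graphZ 0 A_dlg Ax0; rewrite /= scale0r mul0r.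
have /choice[f fA] z : exists t, A (z, t).
  apply: contrapT => z_notin.
  have {}z_notin t : ~ A (z, t) by move=> Azt; apply: z_notin; exists t.
  have [c c_bounds] := extension_value_exists z A_dlg A00.
  have A_lt_ext := graph_extension_proper A00 c z_notin.
  apply: (Amax _ A_lt_ext); split; first exact: graph_extension_dlg.
  by right; apply: A_lt_ext.1.
exists f; split.
- by move=> a b x y; exact: (Afun _ _ (fA _) (Alin _ _ a b (fA x) (fA y))).
- by move=> x; exact: (dominated_linear_graph_norm A_dlg (fA x)).
- exact: (Afun _ _ (fA x0) Ax0).
Qed.

End HahnBanach.

Section LinearFunctionals.
Local Open Scope ring_scope.
Variables (R : realType) (X : completeNormedModType R).
Implicit Types (f g h : X -> R) (L : set X).

Lemma linear_functionalB f x y : linear_functional f -> f (x - y) = f x - f y.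
Proof.
move=> flin; have -> : x - y = 1 *: x + (-1) *: y by rewrite scale1r scaleN1r.
by rewrite flin mul1r mulN1r.
Qed.

Lemma lspan_sub_ker h L :
  linear_functional h -> L `<=` h @^-1` [set 0] -> lspan L `<=` h @^-1` [set 0].
Proof.
move=> hlin hL _ [n [c [v [Lv ->]]]]; elim: n c v Lv => [|n IH] c v Lv.
  by rewrite big_ord0 /= -(subrr 0) linear_functionalB // subrr.
rewrite big_ord_recr /= -[X in h (X + _)]scale1r hlin (hL _ (Lv _)) mulr0 addr0 mul1r.
exact: (IH (fun i => c (widen_ord (leqnSn n) i)) (fun i => v (widen_ord (leqnSn n) i))).
Qed.

Lemma closure_lspan_sub_ker h (K : R) L :
  linear_functional h -> (forall x, `|h x| <= K * `|x|) ->
  L `<=` h @^-1` [set 0] -> closure (lspan L) `<=` h @^-1` [set 0].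
Proof.
move=> hlin hK hL x clx; apply: contrapT => hxN0.
have hx_gt0 : 0 < `|h x| by rewrite normr_gt0; apply/eqP.
have [K_gt0|K_le0] := ltrP 0 K; last first.
  by have := hK x; have := normr_ge0 x; nra.
have [z [spz xz]] := clx _ (nbhsx_ballx x (`|h x| / K) (divr_gt0 hx_gt0 K_gt0)).
move: xz; rewrite -ball_normE /ball_ /= ltr_pdivlMr // => xz.
have := hK (x - z); rewrite linear_functionalB // (lspan_sub_ker hlin hL spz) subr0.
by rewrite mulrC; lra.
Qed.

(* [h] is [f] when [a = 0] and [b f - a g] otherwise; it vanishes on [L] but
   not at [x0], resp. [y0]. *)
Lemma joint_level_set_not_linearly_dense f g (x0 y0 : X) (a b : R) L :
  linear_functional f -> linear_functional g ->
  (forall x, `|f x| <= `|x|) -> (forall x, `|g x| <= `|x|) ->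
  f x0 != 0 -> f y0 = 0 -> g y0 != 0 ->
  (forall s, L s -> f s = a /\ g s = b) -> ~ linearly_dense L.
Proof.
move=> flin glin fK gK fx0 fy0 gy0 Lab Ldense.
have [h [K [hlin hK hL [z hz]]]] : exists h (K : R),
    [/\ linear_functional h, forall x, `|h x| <= K * `|x|,
        L `<=` h @^-1` [set 0] & exists z, h z != 0].
  have [a0|aN0] := eqVneq a 0.
    exists f, 1; split => [//|x|s /Lab[fs _]|]; first by rewrite mul1r.
      by rewrite /preimage /= fs a0.
    by exists x0.
  exists (fun x => b * f x - a * g x), (`|b| + `|a|); split.
  - by move=> a' b' x y; rewrite flin glin; ring.
  - move=> x; apply: le_trans (ler_normB _ _) _; rewrite !normrM mulrDl.
    by apply: lerD; apply: ler_wpM2l.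
  - by move=> s /Lab[fs gs]; rewrite /preimage /= fs gs; ring.
  - by exists y0; rewrite fy0 mulr0 sub0r oppr_eq0 mulf_eq0 negb_or aN0.
by move/eqP: hz; apply; apply: (closure_lspan_sub_ker hlin hK hL); rewrite Ldense.
Qed.

Lemma exists_joint_level_sets_not_linearly_dense :
  ~ ([set: X] #<= [set: R]) -> exists f g : X -> R,
    forall a b L, (forall s, L s -> f s = a /\ g s = b) -> ~ linearly_dense L.
Proof.
move=> XR.
have inj_le (F : X -> R) : (forall x y, F x = F y -> x = y) -> [set: X] #<= [set: R].
  by move=> Finj; apply: (@card_le_of_inj _ _ _ _ F) => // x y _ _; exact: Finj.
have [x0 x0N0] : exists x0 : X, x0 != 0.
  apply: contrapT => X0; apply: XR; apply: (inj_le (fun=> 0)) => x y _.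
  have {}X0 (z : X) : z = 0 by apply: contrapT => /eqP zN0; apply: X0; exists z.
  by rewrite (X0 x) (X0 y).
have [f [flin fK fx0]] := exists_norming_functional x0N0.
have [y0 [y0N0 fy0]] : exists y0 : X, y0 != 0 /\ f y0 = 0.
  apply: contrapT => kerf; apply: XR; apply: (inj_le f) => x y fxy.
  apply/eqP; rewrite -subr_eq0; apply: contrapT => /negP xyN0; apply: kerf.
  by exists (x - y); rewrite linear_functionalB // fxy subrr.
have [g [glin gK gy0]] := exists_norming_functional y0N0.
have fx0N0 : f x0 != 0 by rewrite fx0 normr_eq0.
have gy0N0 : g y0 != 0 by rewrite gy0 normr_eq0.
exists f, g => a b L.
exact: joint_level_set_not_linearly_dense flin glin fK gK fx0N0 fy0 gy0N0.
Qed.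

End LinearFunctionals.

Lemma infinite_setT_num (R : numDomainType) : infinite_set [set: R].
Proof.
apply/infiniteP; apply: (@card_le_of_inj _ _ _ _ (fun n : nat => n%:R%R)) => // n m _ _.
by move/eqP; rewrite eqr_nat => /eqP.
Qed.

Theorem theorem3p9 (R : realType) (X : completeNormedModType R)
    (W : Type) (lt : W -> W -> Prop) :
  initial_ordinal lt ->
  has_dens_card X [set: W] ->
  cf_ge_c_succ R lt ->
  ~ (exists S : set X, overcomplete S).
Proof.
move=> [_ [lt_trans [lt_total [lt_wf W_init]]]] [[DW [DW_dense WDW]] W_dens] cof.
move=> [S [[[DS [DS_dense SDS]] S_dens] S_over]].
have WS : [set: W] #= S.
  apply: Cantor_Bernstein; first by rewrite (card_le_eqr SDS); exact: W_dens DS_dense.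
  by rewrite (card_le_eqr WDW); exact: S_dens DW_dense.
have XR : ~ ([set: X] #<= [set: R]).
  have WR : ~ ([set: W] #<= [set: R]) by apply: cof => w; exists w => //; left.
  move=> XleR; apply: WR; apply: card_le_trans XleR.
  by apply: W_dens => O O0 _; rewrite setIT.
have [f [g fg_nd]] := exists_joint_level_sets_not_linearly_dense XR.
have level_subset := equipotent_level_subset lt_trans lt_total lt_wf W_init cof
  (@infinite_setT_num R).
have [a [L1 L1S [L1S_eq fL1]]] := level_subset _ _ f WS.
have WL1 := card_eq_trans WS (card_esym L1S_eq).
have [b [L2 L2L1 [L2L1_eq gL2]]] := level_subset _ _ g WL1.
apply: (fg_nd a b L2) => [s L2s|]; first by split; [apply/fL1/L2L1|apply: gL2].
apply: S_over; first exact: subset_trans L2L1 L1S.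
exact: card_eq_trans L2L1_eq L1S_eq.
Qed.
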